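(* Let $P_1:\mathbb R^n\to\mathbb R$ be convex and continuous, $A_1\in\mathbb R^{q_1\times n}$, $l_1:\mathbb R^{q_1}\to\mathbb R$ strictly convex with $\{x:l_1(A_1x)\le0\}\neq\emptyset$, and $F(x):=P_1(x)+\delta_{\{l_1(A_1\cdot)\le0\}}(x)$. Suppose (i) $\inf P_1<\inf F$, and (ii) there is a Lagrange multiplier $\bar\lambda\ge0$ for $\min_xF(x)$ such that $x\mapsto P_1(x)+\bar\lambda\,l_1(A_1x)$ is a KL function with exponent $\alpha\in(0,1)$. Then $F$ is a KL function with exponent $\alpha$.
   Context: $\delta_C$ denotes the indicator function of $C$ ($0$ on $C$, $+\infty$ outside); $\partial$ is the convex subdifferential. A Lagrange multiplier for $\min_xF(x)$ is a number $\bar\lambda\ge0$ with $\inf_{x}\{P_1(x)+\bar\lambda l_1(A_1x)\}=\inf_xF(x)>-\infty$. KL function with exponent $\alpha\in[0,1)$: a proper closed $h$ such that at every $\hat x\in{\rm dom}\,\partial h$ there exist $a\in(0,\infty]$, a neighborhood $V$ of $\hat x$ and $a_0>0$ with $a_0(1-\alpha)(h(x)-h(\hat x))^{-\alpha}\,{\rm dist}(0,\partial h(x))\ge1$ for all $x\in V$ with $h(\hat x)<h(x)<h(\hat x)+a$. *)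

From mathcomp Require Import all_boot.
From Stdlib Require Import Reals.
Set Implicit Arguments.
Unset Strict Implicit.
Local Open Scope R_scope.

Definition vec (n : nat) := 'I_n -> R.
Definition mat (q n : nat) := 'I_q -> 'I_n -> R.

Definition vsum {n} (f : 'I_n -> R) : R := \big[Rplus/R0]_(i < n) f i.
Definition dot {n} (x y : vec n) : R := vsum (fun i => x i * y i).
Definition vnorm {n} (x : vec n) : R := sqrt (dot x x).
Definition vsub {n} (x y : vec n) : vec n := fun i => x i - y i.
Definition vcomb {n} (t : R) (x y : vec n) : vec n := fun i => t * x i + (1 - t) * y i.
Definition matvec {q n} (A : mat q n) (x : vec n) : vec q :=
  fun i => vsum (fun j => A i j * x j).

Inductive ER := Fin (r : R) | PInf.
Definition ERlt (a b : ER) : Prop :=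
  match a, b with
  | Fin x, Fin y => x < y
  | Fin _, PInf => True
  | PInf, _ => False
  end.
Definition ERadd (a b : ER) : ER :=
  match a, b with Fin x, Fin y => Fin (x + y) | _, _ => PInf end.

Definition convex {n} (f : vec n -> R) : Prop :=
  forall x y t, 0 <= t <= 1 -> f (vcomb t x y) <= t * f x + (1 - t) * f y.
Definition strictly_convex {n} (f : vec n -> R) : Prop :=
  forall x y t, x <> y -> 0 < t < 1 -> f (vcomb t x y) < t * f x + (1 - t) * f y.
Definition continuous_vec {n} (f : vec n -> R) : Prop :=
  forall x eps, 0 < eps -> exists del, 0 < del /\
    forall y, vnorm (vsub y x) < del -> Rabs (f y - f x) < eps.

(* proper: not identically +oo (values -oo are excluded by the type) *)
Definition proper {n} (h : vec n -> ER) : Prop := exists x r, h x = Fin r.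
(* closed = lower semicontinuous *)
Definition lsc {n} (h : vec n -> ER) : Prop :=
  forall x (t : R), ERlt (Fin t) (h x) -> exists del, 0 < del /\
    forall y, vnorm (vsub y x) < del -> ERlt (Fin t) (h y).

Definition subdiff {n} (h : vec n -> ER) (x v : vec n) : Prop :=
  exists hx, h x = Fin hx /\
    forall y, match h y with
              | Fin hy => hy >= hx + dot v (vsub y x)
              | PInf => True
              end.
Definition in_dom_subdiff {n} (h : vec n -> ER) (x : vec n) : Prop :=
  exists v, subdiff h x v.

(* The inequality
   a0 (1-alpha) (h x - h xh)^(-alpha) dist(0, ∂h(x)) >= 1 is written out as
   "for every v ∈ ∂h(x), a0 (1-alpha) (h x - h xh)^(-alpha) |v| >= 1"
   (dist(0,∂h(x)) = inf_{v ∈ ∂h(x)} |v|, = +oo if ∂h(x) is empty);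
   the neighborhood V is taken to be an open ball (WLOG). *)
Definition KL_exp {n} (h : vec n -> ER) (alpha : R) : Prop :=
  0 <= alpha < 1 /\ proper h /\ lsc h /\
  forall xh, in_dom_subdiff h xh ->
    exists hxh, h xh = Fin hxh /\
    exists (a : ER) (eps a0 : R), ERlt (Fin 0) a /\ 0 < eps /\ 0 < a0 /\
      forall x hx, vnorm (vsub x xh) < eps -> h x = Fin hx ->
        hxh < hx -> ERlt (Fin hx) (ERadd (Fin hxh) a) ->
        forall v, subdiff h x v ->
          a0 * (1 - alpha) * Rpower (hx - hxh) (- alpha) * vnorm v >= 1.

Definition is_inf (S : R -> Prop) (m : R) : Prop :=
  (forall s, S s -> m <= s) /\ (forall b, (forall s, S s -> b <= s) -> b <= m).

Definition Fobj {n q} (P1 : vec n -> R) (A1 : mat q n) (l1 : vec q -> R) : vec n -> ER :=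
  fun x => if Rle_dec (l1 (matvec A1 x)) 0 then Fin (P1 x) else PInf.

Definition Lagr {n q} (P1 : vec n -> R) (A1 : mat q n) (l1 : vec q -> R) (lam : R)
  : vec n -> ER := fun x => Fin (P1 x + lam * l1 (matvec A1 x)).

Definition lagrange_multiplier {n q} (P1 : vec n -> R) (A1 : mat q n) (l1 : vec q -> R)
  (lam : R) : Prop :=
  0 <= lam /\ exists m,
    is_inf (fun s => exists x, s = P1 x + lam * l1 (matvec A1 x)) m /\
    is_inf (fun s => exists x, l1 (matvec A1 x) <= 0 /\ s = P1 x) m.

From HB Require Import structures.
From mathcomp Require Import all_boot.
From Stdlib Require Import Reals Lra Classical FunctionalExtensionality ClassicalEpsilon.
Set Implicit Arguments.
Unset Strict Implicit.
Local Open Scope R_scope.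

(* If xh is not a minimizer of F, a feasible point with smaller value and the subgradient
   inequality bound the subgradients of F near xh away from 0.  Otherwise condition (i) forces
   lam > 0, and strict convexity of l1 shows that the Lagrangian L = P1 + lam l1(A1 .) and F have
   the same minimum m and the same minimizers.  For the convex function L, the KL property with
   exponent alpha yields the error bound dist(x, argmin L) <= C (L x - m)^(1-alpha): proximal
   steps halve the gap L - m while moving at most K (L x - m)^(1-alpha), and their limit is a
   minimizer.  As L <= F on the feasible set, the subgradient inequality of F towards that
   minimizer gives (F x - m)^alpha <= C |v| for v in dF(x), i.e. the KL inequality for F. *)

HB.instance Definition _ :=
  Monoid.isComLaw.Build R R0 Rplus (fun a b c => esym (Rplus_assoc a b c)) Rplus_comm Rplus_0_l.

(** * Vectors *)

Lemma vsum_add n (f g : 'I_n -> R) : vsum (fun i => f i + g i) = vsum f + vsum g.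
Proof. exact: big_split. Qed.

Lemma vsum_scal n c (f : 'I_n -> R) : vsum (fun i => c * f i) = c * vsum f.
Proof. by rewrite /vsum; elim/big_rec2: _ => [|i a b _ ->] /=; ring. Qed.

Lemma vsum_ext n (f g : 'I_n -> R) : (forall i, f i = g i) -> vsum f = vsum g.
Proof. by move=> fg; apply: eq_bigr. Qed.

Lemma vsum_le n (f g : 'I_n -> R) : (forall i, f i <= g i) -> vsum f <= vsum g.
Proof.
move=> fg; rewrite /vsum; elim/big_rec2: _ => [|i a b _ ab] /=; first lra.
by have := fg i; lra.
Qed.

Lemma vsum_const n c : vsum (fun _ : 'I_n => c) = INR n * c.
Proof.
rewrite /vsum big_const_ord; elim: n => [|n IH] /=; first ring.
by rewrite IH; case: n {IH} => [|n] /=; ring.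
Qed.

Lemma vsum_ge_term n (f : 'I_n -> R) i : (forall j, 0 <= f j) -> f i <= vsum f.
Proof.
move=> f_ge0; rewrite /vsum (bigD1 i) //= -{1}(Rplus_0_r (f i)).
apply: Rplus_le_compat_l.
by elim/big_rec: _ => [|j a _ a_ge0]; [lra | have := f_ge0 j; lra].
Qed.

(* Proves identities between sums of terms [c * dot u v]; each scalar must stand in front of its
   [dot] for the sums to be merged. *)
Ltac dot_ring :=
  rewrite /dot -?vsum_scal -?vsum_add; apply: vsum_ext => i; rewrite /vsub /vcomb; field.

Lemma dot_ge0 n (w : vec n) : 0 <= dot w w.
Proof.
rewrite -(Rmult_0_r (INR n)) -vsum_const.
by apply: vsum_le => i; apply: Rle_0_sqr.
Qed.

Lemma dot0l n (w : vec n) : dot (fun _ => 0) w = 0.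
Proof. have -> : dot (fun _ => 0) w = 0 * dot w w by dot_ring. ring. Qed.

Lemma vnorm_ge0 n (w : vec n) : 0 <= vnorm w.
Proof. exact: sqrt_pos. Qed.

Lemma vnorm_sq n (w : vec n) : vnorm w * vnorm w = dot w w.
Proof. exact/sqrt_sqrt/dot_ge0. Qed.

Lemma vnorm_le n (w : vec n) B : 0 <= B -> dot w w <= B * B -> vnorm w <= B.
Proof. by move=> B_ge0 wB; rewrite -(sqrt_square B) //; apply: sqrt_le_1_alt. Qed.

Lemma vnorm_ext n (u w : vec n) : (forall i, u i = w i) -> vnorm u = vnorm w.
Proof. by move=> uw; rewrite (functional_extensionality _ _ uw). Qed.

Lemma vnorm_scale n a (w : vec n) : vnorm (fun i => a * w i) = Rabs a * vnorm w.
Proof.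
rewrite /vnorm -sqrt_Rsqr_abs -sqrt_mult; [congr sqrt | exact: Rle_0_sqr | exact: dot_ge0].
by rewrite /Rsqr; dot_ring.
Qed.

Lemma discriminant_le a b c : 0 <= c ->
  (forall t, 0 <= a + (-2 * t) * b + (t * t) * c) -> b * b <= a * c.
Proof.
move=> c_ge0 quad_ge0; have a_ge0 := quad_ge0 0.
have [c_gt0 | c_le0] := Rlt_le_dec 0 c.
  have := quad_ge0 (b / c).
  have -> : a + -2 * (b / c) * b + b / c * (b / c) * c = (a * c - b * b) / c by field; lra.
  move=> /(Rmult_le_compat_r c _ _ (Rlt_le _ _ c_gt0)).
  have -> : (a * c - b * b) / c * c = a * c - b * b by field; lra.
  lra.
have c0 : c = 0 by lra.
have [b0 | bn0] := Req_dec b 0; first by subst; lra.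
have := quad_ge0 ((a + 1) / (2 * b)); rewrite c0.
have -> : a + -2 * ((a + 1) / (2 * b)) * b + (a + 1) / (2 * b) * ((a + 1) / (2 * b)) * 0 = -1
  by field.
lra.
Qed.

Lemma dot_le_vnorm n (x y : vec n) : dot x y <= vnorm x * vnorm y.
Proof.
have sq : dot x y * dot x y <= dot x x * dot y y.
  apply: discriminant_le => [|t]; first exact: dot_ge0.
  have -> : dot x x + (-2 * t) * dot x y + (t * t) * dot y y =
            dot (fun i => x i - t * y i) (fun i => x i - t * y i) by dot_ring.
  exact: dot_ge0.
apply: Rle_trans (Rle_abs _) _; rewrite -sqrt_Rsqr_abs -sqrt_mult; try exact: dot_ge0.
exact: sqrt_le_1_alt.
Qed.

Lemma vnorm_add n (u w : vec n) : vnorm (fun i => u i + w i) <= vnorm u + vnorm w.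
Proof.
apply: vnorm_le; first by have := vnorm_ge0 u; have := vnorm_ge0 w; lra.
have -> : dot (fun i => u i + w i) (fun i => u i + w i) = dot u u + 2 * dot u w + dot w w
  by dot_ring.
by have := dot_le_vnorm u w; rewrite -(vnorm_sq u) -(vnorm_sq w); lra.
Qed.

Lemma vnorm_triangle n (a b c : vec n) :
  vnorm (vsub a c) <= vnorm (vsub a b) + vnorm (vsub b c).
Proof.
rewrite (@vnorm_ext n _ (fun i => vsub a b i + vsub b c i)); first exact: vnorm_add.
by move=> i; rewrite /vsub; ring.
Qed.

Lemma vnorm_subC n (a b : vec n) : vnorm (vsub a b) = vnorm (vsub b a).
Proof. by rewrite /vnorm; congr sqrt; dot_ring. Qed.

Lemma vnorm_subv n (a : vec n) : vnorm (vsub a a) = 0.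
Proof.
rewrite /vnorm; have -> : dot (vsub a a) (vsub a a) = 0 * dot a a by dot_ring.
by rewrite Rmult_0_l sqrt_0.
Qed.

Lemma abs_coord_le_vnorm n (w : vec n) i : Rabs (w i) <= vnorm w.
Proof.
rewrite -sqrt_Rsqr_abs; apply: sqrt_le_1_alt.
by apply: (@vsum_ge_term n (fun j => w j * w j)) => j; apply: Rle_0_sqr.
Qed.

Lemma vnorm_le_coord n (w : vec n) b :
  0 <= b -> (forall i, Rabs (w i) <= b) -> vnorm w <= sqrt (INR n) * b.
Proof.
move=> b_ge0 wb.
apply: vnorm_le; first by apply: Rmult_le_pos => //; apply: sqrt_pos.
have -> : sqrt (INR n) * b * (sqrt (INR n) * b) = INR n * (b * b).
  by have := sqrt_sqrt _ (pos_INR n); nra.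
rewrite -vsum_const; apply: vsum_le => i; have := wb i.
have -> : w i * w i = Rabs (w i) * Rabs (w i).
  by rewrite -Rabs_mult Rabs_pos_eq //; apply: Rle_0_sqr.
by move=> wib; apply: Rmult_le_compat; try exact: Rabs_pos.
Qed.

Lemma dot_ge_opp_vnorm n (x y : vec n) : - (vnorm x * vnorm y) <= dot x y.
Proof.
have := dot_le_vnorm (fun i => -1 * x i) y.
have -> : dot (fun i => -1 * x i) y = -1 * dot x y by dot_ring.
rewrite vnorm_scale Rabs_Ropp Rabs_R1; lra.
Qed.

(** * Vanishing sequences and completeness *)

Definition vanishes (u : nat -> R) :=
  forall d, 0 < d -> exists N, forall k, (N <= k)%nat -> u k < d.

Lemma vanishes_scale a u : 0 <= a -> vanishes u -> vanishes (fun k => a * u k).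
Proof.
move=> a_ge0 u0 d d_gt0.
have d'_gt0 : 0 < d / (a + 1) by apply: Rdiv_lt_0_compat; lra.
have [N uN] := u0 _ d'_gt0; exists N => k /uN ukd.
have : (a + 1) * (d / (a + 1)) = d by field; lra.
nra.
Qed.

Lemma vanishes_inv_succ : vanishes (fun k => / (INR k + 1)).
Proof.
move=> d d_gt0; have [N /Rlt_le N_gt] := INR_unbounded (/ d); exists N => k /leP /le_INR Nk.
rewrite -(Rinv_inv d); apply: Rinv_lt_contravar; last lra.
by apply: Rmult_lt_0_compat; [apply: Rinv_0_lt_compat | have := pos_INR k]; lra.
Qed.

Lemma vanishes_geometric c q : 0 <= c -> 0 <= q < 1 -> vanishes (fun k => c * q ^ k).
Proof.
move=> c_ge0 q01; apply: vanishes_scale => // d d_gt0.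
have [N qN] := pow_lt_1_zero q ltac:(rewrite Rabs_pos_eq; lra) d d_gt0.
by exists N => k Nk; rewrite -(Rabs_pos_eq (q ^ k)); [apply: qN; apply/leP | apply: pow_le; lra].
Qed.

Lemma vanishes_sqrt u : vanishes u -> vanishes (fun k => sqrt (u k)).
Proof.
move=> u0 d d_gt0; have [N uN] := u0 (d * d) ltac:(nra); exists N => k /uN ukd.
have [uk_le0 | uk_gt0] := Rle_lt_dec (u k) 0; first by rewrite sqrt_neg_0.
by rewrite -(sqrt_square d); [apply: sqrt_lt_1_alt; lra | lra].
Qed.

Lemma Un_cv_dist_le (u : nat -> R) l k beta :
  Un_cv u l -> (forall j, (k <= j)%nat -> Rabs (u j - u k) <= beta) -> Rabs (l - u k) <= beta.
Proof.
move=> ul near; apply: Rnot_lt_le => far.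
have [N uN] := ul (Rabs (l - u k) - beta) ltac:(lra).
have := uN (maxn N k) ltac:(apply/leP; exact: leq_maxl).
have := near (maxn N k) (leq_maxr N k); rewrite /R_dist.
have := Rabs_triang (l - u (maxn N k)) (u (maxn N k) - u k).
have -> : l - u (maxn N k) + (u (maxn N k) - u k) = l - u k by ring.
rewrite (Rabs_minus_sym (u (maxn N k)) l); lra.
Qed.

Lemma vec_cauchy_complete n (z : nat -> vec n) (b : nat -> R) :
  (forall j k, (k <= j)%nat -> vnorm (vsub (z j) (z k)) <= b k) -> vanishes b ->
  exists y : vec n, forall k, vnorm (vsub y (z k)) <= sqrt (INR n) * b k.
Proof.
move=> zb b0.
have coord_near j k i : (k <= j)%nat -> Rabs (z j i - z k i) <= b k.
  by move=> kj; apply: Rle_trans (zb j k kj); apply: (abs_coord_le_vnorm (vsub (z j) (z k))).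
have coord_cauchy i : Cauchy_crit (fun k => z k i).
  move=> e e_gt0; have [N bN] := b0 e e_gt0; exists N => j k /leP Nj /leP Nk; rewrite /R_dist.
  have [kj | jk] := leqP k j; first by have := coord_near j k i kj; have := bN k Nk; lra.
  rewrite Rabs_minus_sym; have := coord_near k j i (ltnW jk); have := bN j Nj; lra.
exists (fun i => proj1_sig (R_complete _ (coord_cauchy i))) => k.
apply: vnorm_le_coord => [|i]; first by have := zb k k (leqnn k); rewrite vnorm_subv.
rewrite /vsub; case: (R_complete _ (coord_cauchy i)) => l ul /=.
by apply: Un_cv_dist_le ul _ => j; apply: coord_near.
Qed.

(** * Lower semicontinuity and proximal points *)

Definition lsc_real n (L : vec n -> R) :=
  forall x t, t < L x -> exists del, 0 < del /\ forall y, vnorm (vsub y x) < del -> t < L y.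

Definition subgrad n (L : vec n -> R) (x u : vec n) := forall z, L x + dot u (vsub z x) <= L z.

Lemma subgrad_gap_le n (L : vec n -> R) x y v :
  L x + dot v (vsub y x) <= L y -> L x - L y <= vnorm v * vnorm (vsub x y).
Proof. by have := dot_ge_opp_vnorm v (vsub y x); rewrite (vnorm_subC y x); lra. Qed.

Lemma lsc_limit_le n (L : vec n -> R) (z : nat -> vec n) y s (beta gamma : nat -> R) :
  lsc_real L -> vanishes beta -> vanishes gamma ->
  (forall k, vnorm (vsub y (z k)) <= beta k) -> (forall k, L (z k) <= s + gamma k) ->
  L y <= s.
Proof.
move=> L_lsc beta0 gamma0 zy Lz; apply: Rnot_lt_le => s_lt.
have [del [del_gt0 near]] := L_lsc y ((s + L y) / 2) ltac:(lra).
have [N1 bN] := beta0 del del_gt0; have [N2 gN] := gamma0 ((L y - s) / 2) ltac:(lra).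
have k1 := bN (maxn N1 N2) (leq_maxl _ _); have k2 := gN (maxn N1 N2) (leq_maxr _ _).
have := near (z (maxn N1 N2)); rewrite vnorm_subC.
by have := zy (maxn N1 N2); have := Lz (maxn N1 N2); lra.
Qed.

Lemma lsc_add_sqdist n (L : vec n -> R) x c :
  lsc_real L -> 0 <= c -> lsc_real (fun z => L z + c * dot (vsub z x) (vsub z x)).
Proof.
move=> L_lsc c_ge0 y t t_lt; set eta := (L y + c * dot (vsub y x) (vsub y x) - t) / 2.
have eta_gt0 : 0 < eta by rewrite /eta; lra.
have [del [del_gt0 near]] := L_lsc y (L y - eta) ltac:(lra).
set r := vnorm (vsub y x); have r_ge0 : 0 <= r := vnorm_ge0 _.
exists (Rmin del (eta / (2 * c * r + 1))); split.
  by apply: Rmin_glb_lt => //; apply: Rdiv_lt_0_compat; nra.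
move=> z z_near; have Lz := near z (Rlt_le_trans _ _ _ z_near (Rmin_l _ _)).
have zy := Rlt_le_trans _ _ _ z_near (Rmin_r _ _).
have sqdist : dot (vsub z x) (vsub z x) =
    dot (vsub y x) (vsub y x) + 2 * dot (vsub y x) (vsub z y) + dot (vsub z y) (vsub z y)
  by dot_ring.
have zy_ge0 := vnorm_ge0 (vsub z y); set d := vnorm (vsub z y) in zy zy_ge0.
have cross : - (c * (r * d)) <= c * dot (vsub y x) (vsub z y).
  rewrite Ropp_mult_distr_r; apply: Rmult_le_compat_l => //; exact: dot_ge_opp_vnorm.
have : 0 <= c * dot (vsub z y) (vsub z y) by apply: Rmult_le_pos => //; apply: dot_ge0.
have : 2 * c * r * d <= eta.
  have : (2 * c * r + 1) * (eta / (2 * c * r + 1)) = eta by field; nra.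
  nra.
rewrite sqdist /eta in Lz *; lra.
Qed.

Lemma inf_approx (T : Type) (Phi : T -> R) m (z0 : T) : (forall z, m <= Phi z) ->
  exists I, (forall z, I <= Phi z) /\ forall k : nat, exists z, Phi z < I + / (INR k + 1).
Proof.
move=> Phi_ge; pose E r := exists z, r = - Phi z.
have [U [U_ub U_lub]] : {U | is_lub E U}.
  by apply: completeness; [exists (- m) => _ [z ->]; have := Phi_ge z; lra | exists (- Phi z0), z0].
exists (- U); split => [z | k]; first by have := U_ub (- Phi z) (ex_intro _ z erefl); lra.
have k_gt0 : 0 < / (INR k + 1) by apply: Rinv_0_lt_compat; have := pos_INR k; lra.
apply: NNPP => no_z; suff : U <= U - / (INR k + 1) by lra.
by apply: U_lub => _ [z ->]; apply: Rnot_lt_le => zk; apply: no_z; exists z; lra.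
Qed.

(* The midpoint inequality makes every minimizing sequence Cauchy. *)
Lemma midconvex_attains_min n (Phi : vec n -> R) m kappa :
  0 < kappa -> lsc_real Phi -> (forall z, m <= Phi z) ->
  (forall a b, Phi (vcomb (/ 2) a b) <= (Phi a + Phi b) / 2 - kappa * dot (vsub a b) (vsub a b)) ->
  exists y, forall z, Phi y <= Phi z.
Proof.
move=> kappa_gt0 Phi_lsc Phi_ge Phi_mid.
have [I [I_le approx]] := @inf_approx (vec n) Phi m (fun _ => 0) Phi_ge.
have [zs zs_approx] := choice _ approx.
pose b k := sqrt (/ kappa * / (INR k + 1)).
have zs_cauchy j k : (k <= j)%nat -> vnorm (vsub (zs j) (zs k)) <= b k.
  move=> /leP /le_INR kj; apply: sqrt_le_1_alt.
  have : / (INR j + 1) <= / (INR k + 1).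
    by apply: Rinv_le_contravar; [have := pos_INR k | ]; lra.
  have := I_le (vcomb (/ 2) (zs j) (zs k)); have := Phi_mid (zs j) (zs k).
  have := zs_approx j; have := zs_approx k; have := dot_ge0 (vsub (zs j) (zs k)).
  set D := dot _ _ => D_ge0 *.
  have -> : D = / kappa * (kappa * D) by field; lra.
  by apply: Rmult_le_compat_l; [apply: Rlt_le; apply: Rinv_0_lt_compat | lra].
have b0 : vanishes b.
  by apply: vanishes_sqrt; apply: vanishes_scale vanishes_inv_succ; apply/Rlt_le/Rinv_0_lt_compat.
have [y zs_y] := vec_cauchy_complete zs_cauchy b0.
exists y => z; apply: Rle_trans (I_le z).
apply: lsc_limit_le Phi_lsc (vanishes_scale (sqrt_pos _) b0) vanishes_inv_succ zs_y _.
by move=> k; apply: Rlt_le.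
Qed.

Lemma le0_of_forall_small G M : (forall t, 0 < t <= 1 -> 0 <= G + t * M) -> 0 <= G.
Proof.
move=> small; apply: Rnot_lt_le => G_lt0.
pose t := Rmin 1 (- G / (Rabs M + 1)).
have t_gt0 : 0 < t by apply: Rmin_glb_lt; [lra | apply: Rdiv_lt_0_compat; have := Rabs_pos M; lra].
have t_le : t * (Rabs M + 1) <= - G.
  have : t <= - G / (Rabs M + 1) := Rmin_r _ _.
  have : - G / (Rabs M + 1) * (Rabs M + 1) = - G by field; have := Rabs_pos M; lra.
  by have := Rabs_pos M; nra.
have := small t (conj t_gt0 (Rmin_l _ _)); have := Rle_abs M; nra.
Qed.

Lemma prox_optimality n (L : vec n -> R) x y tau : convex L -> 0 < tau ->
  (forall z, L y + / (2 * tau) * dot (vsub y x) (vsub y x) <=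
             L z + / (2 * tau) * dot (vsub z x) (vsub z x)) ->
  subgrad L y (fun i => / tau * (x i - y i)).
Proof.
move=> L_cvx tau_gt0 y_min z.
have -> : dot (fun i => / tau * (x i - y i)) (vsub z y) =
          - (2 * / (2 * tau)) * dot (vsub y x) (vsub z y) by dot_ring; lra.
have c_gt0 : 0 < / (2 * tau) by apply: Rinv_0_lt_compat; lra.
set c := / (2 * tau) in y_min c_gt0 *; set D := dot (vsub y x) (vsub z y).
have N_ge0 := dot_ge0 (vsub z y); set N := dot (vsub z y) (vsub z y) in N_ge0.
suff : 0 <= L z - L y + 2 * c * D by lra.
apply: (@le0_of_forall_small _ (c * N)) => t t01.
have := y_min (vcomb t z y); have := L_cvx z y t ltac:(lra).
have -> : dot (vsub (vcomb t z y) x) (vsub (vcomb t z y) x) =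
          dot (vsub y x) (vsub y x) + 2 * t * D + t * t * N by rewrite /D /N; dot_ring.
move=> Lcomb Lmin; apply: (Rmult_le_reg_l t); first lra.
by rewrite Rmult_0_r; nra.
Qed.

Lemma prox_exists n (L : vec n -> R) m x tau :
  convex L -> lsc_real L -> (forall z, m <= L z) -> 0 < tau ->
  exists y, subgrad L y (fun i => / tau * (x i - y i)).
Proof.
move=> L_cvx L_lsc L_ge tau_gt0; pose c := / (2 * tau).
have c_gt0 : 0 < c by apply: Rinv_0_lt_compat; lra.
pose Phi z := L z + c * dot (vsub z x) (vsub z x).
have Phi_ge z : m <= Phi z by have := L_ge z; have := dot_ge0 (vsub z x); rewrite /Phi; nra.
have Phi_mid a b :
    Phi (vcomb (/ 2) a b) <= (Phi a + Phi b) / 2 - c / 4 * dot (vsub a b) (vsub a b).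
  have := L_cvx a b (/ 2) ltac:(lra); rewrite /Phi.
  have -> : dot (vsub (vcomb (/ 2) a b) x) (vsub (vcomb (/ 2) a b) x) =
      / 2 * dot (vsub a x) (vsub a x) + / 2 * dot (vsub b x) (vsub b x)
      + - / 4 * dot (vsub a b) (vsub a b) by dot_ring.
  lra.
have kappa_gt0 : 0 < c / 4 by lra.
have [y y_min] :=
  midconvex_attains_min kappa_gt0 (lsc_add_sqdist L_lsc (Rlt_le _ _ c_gt0)) Phi_ge Phi_mid.
by exists y; apply: prox_optimality.
Qed.

Lemma prox_dist_sq n (L : vec n -> R) x y tau : 0 < tau ->
  subgrad L y (fun i => / tau * (x i - y i)) -> dot (vsub x y) (vsub x y) <= tau * (L x - L y).
Proof.
move=> tau_gt0 /(_ x).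
have -> : dot (fun i => / tau * (x i - y i)) (vsub x y) = / tau * dot (vsub x y) (vsub x y)
  by dot_ring; lra.
move=> Lxy; have : / tau * dot (vsub x y) (vsub x y) <= L x - L y by lra.
move=> /(Rmult_le_compat_l tau _ _ (Rlt_le _ _ tau_gt0)).
rewrite -Rmult_assoc Rinv_r ?Rmult_1_l //; lra.
Qed.

(** * Real powers *)

Lemma Rpower_pos x y : 0 < Rpower x y.
Proof. exact: exp_pos. Qed.

Lemma Rpower_base1 y : Rpower 1 y = 1.
Proof. by rewrite /Rpower ln_1 Rmult_0_r exp_0. Qed.

Lemma Rpower_le1 s a : 0 < s <= 1 -> 0 <= a -> Rpower s a <= 1.
Proof. by move=> s01 a_ge0; rewrite -(Rpower_base1 a); apply: Rle_Rpower_l. Qed.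

Lemma Rpower_invK z a : 0 < z -> 0 < a -> Rpower (Rpower z (/ a)) a = z.
Proof. by move=> z_gt0 a_gt0; rewrite Rpower_mult Rinv_l ?Rpower_1 //; lra. Qed.

Lemma Rpower_half_bounds a : 0 < a -> 0 < Rpower (/ 2) a < 1.
Proof.
split; first exact: Rpower_pos.
by rewrite -(Rpower_base1 a); apply: Rlt_Rpower_l; lra.
Qed.

Lemma Rpower_le_of_le_mul_Rpower s a V : 0 < s -> s <= V * Rpower s (1 - a) -> Rpower s a <= V.
Proof.
move=> s_gt0 s_le; have sa_gt0 := Rpower_pos s a; have s1a_gt0 := Rpower_pos s (1 - a).
have e : Rpower s a * Rpower s (1 - a) = s.
  by rewrite -Rpower_plus (_ : a + (1 - a) = 1) ?Rpower_1 //; ring.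
by apply: (Rmult_le_reg_r (Rpower s (1 - a))) => //; rewrite e.
Qed.

Lemma Rpower_geometric r h a k : 0 < r -> 0 < h ->
  Rpower (r * h ^ k) a = Rpower r a * Rpower h a ^ k.
Proof.
move=> r_gt0 h_gt0; elim: k => [|k IH] /=; first by rewrite !Rmult_1_r.
have -> : r * (h * h ^ k) = (r * h ^ k) * h by ring.
rewrite -Rpower_mult_distr ?IH; [ring | | lra].
by apply: Rmult_lt_0_compat => //; apply: pow_lt.
Qed.

(** * Error bound from the KL inequality *)

Lemma geometric_steps_dist n (z : nat -> vec n) B q : 0 <= q < 1 ->
  (forall k, vnorm (vsub (z k.+1) (z k)) <= B * q ^ k) ->
  forall j k, (k <= j)%nat -> vnorm (vsub (z j) (z k)) <= B / (1 - q) * q ^ k.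
Proof.
move=> q01 steps j k /subnKC <-; set i := (j - k)%nat; clearbody i.
have B_ge0 : 0 <= B.
  by have := steps 0%nat; have := vnorm_ge0 (vsub (z 1%nat) (z 0%nat)); rewrite /= Rmult_1_r; lra.
have Bq_ge0 : 0 <= B / (1 - q).
  by apply: Rmult_le_pos => //; apply: Rlt_le; apply: Rinv_0_lt_compat; lra.
suff : vnorm (vsub (z (k + i)%nat) (z k)) <= B * (q ^ k - q ^ (k + i)) / (1 - q).
  have : 0 <= B / (1 - q) * q ^ (k + i) by apply: Rmult_le_pos => //; apply: pow_le; lra.
  have -> : B * (q ^ k - q ^ (k + i)) / (1 - q) = B / (1 - q) * q ^ k - B / (1 - q) * q ^ (k + i)
    by field; lra.
  lra.
elim: i => [|i IH]; first by rewrite addn0 vnorm_subv Rminus_diag /Rdiv Rmult_0_r Rmult_0_l; lra.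
rewrite addnS; have := vnorm_triangle (z (k + i).+1) (z (k + i)%nat) (z k).
have -> : B * (q ^ k - q ^ (k + i).+1) / (1 - q) =
          B * q ^ (k + i) + B * (q ^ k - q ^ (k + i)) / (1 - q) by rewrite /=; field; lra.
by have := steps (k + i)%nat; lra.
Qed.

(* Quantifying over all [bb >= L x - m] rather than using [L x - m] itself sidesteps
   [Rpower 0 _ = 1]. *)
Definition halving_step n (L : vec n -> R) m K alpha (x y : vec n) :=
  L y - m <= (L x - m) / 2 /\
  forall bb, 0 < bb -> L x - m <= bb -> vnorm (vsub x y) <= K * Rpower bb (1 - alpha).

Section HalvingOrbit.

Variables (n : nat) (L : vec n -> R) (m alpha K : R).
Variables (G : vec n -> Prop) (f : vec n -> vec n) (x0 : vec n).
Hypotheses (alpha01 : 0 < alpha < 1) (K_gt0 : 0 < K) (L_lsc : lsc_real L) (x0_gap : m < L x0).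
Hypothesis f_step : forall x, G x -> halving_step L m K alpha x (f x).

Let q := Rpower (/ 2) (1 - alpha).
Let r0 := L x0 - m.
Let B0 := K * Rpower r0 (1 - alpha).

Hypothesis G_ball : forall x, vnorm (vsub x x0) <= B0 / (1 - q) -> L x - m <= r0 -> G x.

Let orbit k := iter k f x0.

Lemma orbit_step k :
  L (orbit k) - m <= r0 * (/ 2) ^ k -> vnorm (vsub (orbit k) x0) <= B0 * (1 - q ^ k) / (1 - q) ->
  L (orbit k.+1) - m <= r0 * (/ 2) ^ k.+1 /\ vnorm (vsub (orbit k.+1) (orbit k)) <= B0 * q ^ k.
Proof.
move=> gap_k dist_k; have [q_gt0 q_lt1] : 0 < q < 1 by apply: Rpower_half_bounds; lra.
have half_k : 0 < (/ 2) ^ k by apply: pow_lt; lra.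
have r0_gt0 : 0 < r0 by rewrite /r0; lra.
have B0_gt0 : 0 < B0 by apply: Rmult_lt_0_compat => //; apply: Rpower_pos.
have G_k : G (orbit k).
  apply: G_ball.
    apply: Rle_trans dist_k _; rewrite /Rdiv; apply: Rmult_le_compat_r.
      by apply: Rlt_le; apply: Rinv_0_lt_compat; lra.
    by have := pow_le q k (Rlt_le _ _ q_gt0); nra.
  by apply: Rle_trans gap_k _; have := pow_incr (/ 2) 1 k ltac:(lra); rewrite pow1; nra.
have [gap_step dist_step] := f_step G_k.
have orbitS : orbit k.+1 = f (orbit k) by rewrite /orbit iterS.
rewrite orbitS; split; first by rewrite /=; lra.
rewrite vnorm_subC; apply: Rle_trans (dist_step _ (Rmult_lt_0_compat _ _ r0_gt0 half_k) gap_k) _.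
by rewrite Rpower_geometric // /B0 /q; lra.
Qed.

Lemma orbit_bounds k :
  L (orbit k) - m <= r0 * (/ 2) ^ k /\ vnorm (vsub (orbit k) x0) <= B0 * (1 - q ^ k) / (1 - q).
Proof.
have [_ q_lt1] : 0 < q < 1 by apply: Rpower_half_bounds; lra.
elim: k => [|k [gap_k dist_k]].
  rewrite /orbit /= vnorm_subv Rmult_1_r Rminus_diag /Rdiv Rmult_0_r Rmult_0_l.
  by split; [rewrite /r0 |]; lra.
have [gap_k1 step_k] := orbit_step gap_k dist_k; split => //.
have := vnorm_triangle (orbit k.+1) (orbit k) x0.
have -> : B0 * (1 - q ^ k.+1) / (1 - q) = B0 * q ^ k + B0 * (1 - q ^ k) / (1 - q)
  by rewrite /=; field; lra.
lra.
Qed.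

Lemma halving_orbit_limit :
  exists p, L p <= m /\ vnorm (vsub x0 p) <= sqrt (INR n) * (B0 / (1 - q)).
Proof.
have [q_gt0 q_lt1] : 0 < q < 1 by apply: Rpower_half_bounds; lra.
have B0q_ge0 : 0 <= B0 / (1 - q).
  apply: Rmult_le_pos; last by apply: Rlt_le; apply: Rinv_0_lt_compat; lra.
  by apply: Rmult_le_pos; [lra | apply: Rlt_le; apply: Rpower_pos].
have steps k : vnorm (vsub (orbit k.+1) (orbit k)) <= B0 * q ^ k.
  by have [gap_k dist_k] := orbit_bounds k; have [] := orbit_step gap_k dist_k.
have bq0 := vanishes_geometric B0q_ge0 (conj (Rlt_le _ _ q_gt0) q_lt1).
have cauchy := geometric_steps_dist (conj (Rlt_le _ _ q_gt0) q_lt1) steps.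
have [p orbit_p] := vec_cauchy_complete cauchy bq0.
have dist_vanishes := vanishes_scale (sqrt_pos (INR n)) bq0.
exists p; split.
  apply: (lsc_limit_le (gamma := fun k => r0 * (/ 2) ^ k) L_lsc dist_vanishes _ orbit_p).
    by apply: vanishes_geometric; rewrite /r0; lra.
  by move=> k; have [gap_k _] := orbit_bounds k; lra.
by rewrite vnorm_subC; have := orbit_p 0%nat; rewrite /= Rmult_1_r.
Qed.

End HalvingOrbit.

Section KLErrorBound.

Variables (n : nat) (L : vec n -> R) (m : R) (xh : vec n) (alpha eps A c : R).
Hypotheses (alpha01 : 0 < alpha < 1) (L_cvx : convex L) (L_lsc : lsc_real L)
  (L_ge : forall x, m <= L x) (eps_gt0 : 0 < eps) (A_gt0 : 0 < A) (c_gt0 : 0 < c).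
Hypothesis L_KL : forall x u, vnorm (vsub x xh) < eps -> m < L x -> L x < m + A ->
  subgrad L x u -> c * Rpower (L x - m) alpha <= vnorm u.

Let K := 2 / c.
Let A1 := Rmin A (Rpower (c * eps / 4) (/ (1 - alpha))).

Lemma KL_prox_dist x y tau : 0 < tau ->
  vnorm (vsub y xh) < eps -> m < L y -> L y < m + A -> subgrad L y (fun i => / tau * (x i - y i)) ->
  c * tau * Rpower (L y - m) alpha <= vnorm (vsub x y).
Proof.
move=> tau_gt0 y_near y_gap y_small /(L_KL y_near y_gap y_small).
rewrite (vnorm_ext (w := fun i => / tau * vsub x y i)) // vnorm_scale Rabs_pos_eq; last first.
  by apply: Rlt_le; apply: Rinv_0_lt_compat.
move=> /(Rmult_le_compat_l tau _ _ (Rlt_le _ _ tau_gt0)).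
have -> : tau * (/ tau * vnorm (vsub x y)) = vnorm (vsub x y) by field; lra.
lra.
Qed.

Lemma KL_prox_step x : vnorm (vsub x xh) < eps / 2 -> m < L x -> L x - m < A1 ->
  exists y, halving_step L m K alpha x y.
Proof.
move=> x_near x_gap x_small; have K_gt0 : 0 < K by apply: Rdiv_lt_0_compat; lra.
set w := Rpower ((L x - m) / 2) (1 - alpha); set e := Rpower ((L x - m) / 2) alpha.
have w_gt0 : 0 < w := Rpower_pos _ _; have e_gt0 : 0 < e := Rpower_pos _ _.
have we : w * e = (L x - m) / 2.
  by rewrite -Rpower_plus (_ : 1 - alpha + alpha = 1) ?Rpower_1 //; lra.
(* With this step size, a proximal step that does not halve the gap would, by the KL inequality
   at [y], move farther than the descent estimate [prox_dist_sq] allows. *)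
pose tau := w / (e * c * c).
have tau_gt0 : 0 < tau by apply: Rdiv_lt_0_compat => //; do 2 apply: Rmult_lt_0_compat => //.
have [y y_sub] := prox_exists x L_cvx L_lsc L_ge tau_gt0.
have dist_sq := prox_dist_sq tau_gt0 y_sub.
have Ly_le : L y <= L x by have := dot_ge0 (vsub x y); nra.
have dist : vnorm (vsub x y) <= K * w.
  apply: vnorm_le; first by apply: Rmult_le_pos; lra.
  have -> : K * w * (K * w) = 4 * (tau * ((L x - m) / 2)) by rewrite /K /tau -we; field; lra.
  by have := L_ge y; nra.
have Kw_small : K * w <= eps / 2.
  have : w <= c * eps / 4.
    rewrite -(@Rpower_invK (c * eps / 4) (1 - alpha)); try nra.
    apply: Rle_Rpower_l; first lra; split; first lra.
    by apply: Rle_trans (Rmin_r A _); rewrite /A1 in x_small; lra.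
  have -> : eps / 2 = K * (c * eps / 4) by rewrite /K; field; lra.
  by apply: Rmult_le_compat_l; lra.
exists y; split.
  apply: Rnot_lt_le => halves.
  have y_near : vnorm (vsub y xh) < eps.
    by have := vnorm_triangle y x xh; rewrite (vnorm_subC y x); lra.
  have y_small : L y < m + A.
    by have := Rmin_l A (Rpower (c * eps / 4) (/ (1 - alpha))); rewrite /A1 in x_small; lra.
  have e_le : e <= Rpower (L y - m) alpha by apply: Rle_Rpower_l; lra.
  have ct_gt0 : 0 < c * tau by apply: Rmult_lt_0_compat.
  have ct_le : c * tau * e <= vnorm (vsub x y).
    apply: Rle_trans (KL_prox_dist tau_gt0 y_near _ y_small y_sub); last lra.
    by apply: Rmult_le_compat_l => //; apply: Rlt_le.
  have : c * tau * e * (c * tau * e) <= dot (vsub x y) (vsub x y).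
    by rewrite -vnorm_sq; apply: Rmult_le_compat => //; apply: Rlt_le; apply: Rmult_lt_0_compat.
  have -> : c * tau * e * (c * tau * e) = tau * ((L x - m) / 2) by rewrite /tau -we; field; lra.
  by nra.
move=> bb bb_gt0 r_le; apply: Rle_trans dist _; apply: Rmult_le_compat_l; first lra.
by apply: Rle_Rpower_l; lra.
Qed.

Lemma KL_prox_map : exists f, forall x,
  vnorm (vsub x xh) < eps / 2 /\ L x - m < A1 -> halving_step L m K alpha x (f x).
Proof.
apply: (choice (fun x y => _ -> halving_step L m K alpha x y)) => x.
have [[x_near x_small] | not_G] := classic (vnorm (vsub x xh) < eps / 2 /\ L x - m < A1).
  have [x_gap | x_min] := Rlt_le_dec m (L x).
    by have [y y_step] := KL_prox_step x_near x_gap x_small; exists y.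
  exists x => _; split => [|bb _ _]; first by have := L_ge x; lra.
  rewrite vnorm_subv; apply: Rmult_le_pos; last exact/Rlt_le/Rpower_pos.
  by apply: Rlt_le; apply: Rdiv_lt_0_compat; lra.
by exists x => /not_G.
Qed.

Lemma KL_error_bound : exists eps' a' C, 0 < eps' /\ 0 < a' /\ 0 < C /\
  forall x, vnorm (vsub x xh) < eps' -> m < L x -> L x < m + a' ->
    exists p, L p <= m /\ vnorm (vsub x p) <= C * Rpower (L x - m) (1 - alpha).
Proof.
have K_gt0 : 0 < K by apply: Rdiv_lt_0_compat; lra.
have A1_gt0 : 0 < A1 by apply: Rmin_glb_lt => //; apply: Rpower_pos.
have [f f_step] := KL_prox_map.
pose q := Rpower (/ 2) (1 - alpha).
have [q_gt0 q_lt1] : 0 < q < 1 by apply: Rpower_half_bounds; lra.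
(* [a'] keeps the whole orbit of halving steps from [x0] inside the region of [KL_prox_step]. *)
pose z0 := eps * (1 - q) / (4 * K); have z0_gt0 : 0 < z0 by apply: Rdiv_lt_0_compat; nra.
pose a' := Rmin A1 (Rpower z0 (/ (1 - alpha))).
have a'_gt0 : 0 < a' by apply: Rmin_glb_lt => //; apply: Rpower_pos.
exists (eps / 4), a', ((sqrt (INR n) + 1) * K / (1 - q)); do 2 (split; first lra); split.
  by apply: Rdiv_lt_0_compat; [have := sqrt_pos (INR n); nra | lra].
move=> x0 x0_near x0_gap; rewrite /a' => x0_small.
have B0_ge0 : 0 <= K * Rpower (L x0 - m) (1 - alpha) / (1 - q).
  apply: Rmult_le_pos; last by apply/Rlt_le/Rinv_0_lt_compat; lra.
  by apply: Rmult_le_pos; [lra | exact/Rlt_le/Rpower_pos].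
set B0 := K * Rpower (L x0 - m) (1 - alpha) / (1 - q) in B0_ge0 *.
have B0_small : B0 <= eps / 4.
  have : Rpower (L x0 - m) (1 - alpha) <= z0.
    rewrite -(@Rpower_invK z0 (1 - alpha)) //; last lra.
    apply: Rle_Rpower_l; [lra | split; first lra].
    by have := Rmin_r A1 (Rpower z0 (/ (1 - alpha))); lra.
  have -> : eps / 4 = K * z0 / (1 - q) by rewrite /z0; field; lra.
  move=> R_le; rewrite /B0 /Rdiv; apply: Rmult_le_compat_r.
    by apply: Rlt_le; apply: Rinv_0_lt_compat; lra.
  by apply: Rmult_le_compat_l; lra.
have G_ball x : vnorm (vsub x x0) <= B0 -> L x - m <= L x0 - m ->
    vnorm (vsub x xh) < eps / 2 /\ L x - m < A1.
  move=> x_near x_gap; split; first by have := vnorm_triangle x x0 xh; lra.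
  by have := Rmin_l A1 (Rpower z0 (/ (1 - alpha))); lra.
have [p [Lp dist_p]] := halving_orbit_limit alpha01 K_gt0 L_lsc x0_gap f_step G_ball.
rewrite -/q -/B0 in dist_p; exists p; split => //; apply: Rle_trans dist_p _.
have -> : (sqrt (INR n) + 1) * K / (1 - q) * Rpower (L x0 - m) (1 - alpha) = (sqrt (INR n) + 1) * B0
  by rewrite /B0; field; lra.
by have := sqrt_pos (INR n); nra.
Qed.

End KLErrorBound.

(** * KL inequalities of extended-valued functions *)

Definition KL_at n (h : vec n -> ER) alpha xh hxh :=
  exists (a : ER) (eps a0 : R), ERlt (Fin 0) a /\ 0 < eps /\ 0 < a0 /\
    forall x hx, vnorm (vsub x xh) < eps -> h x = Fin hx ->
      hxh < hx -> ERlt (Fin hx) (ERadd (Fin hxh) a) ->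
      forall v, subdiff h x v -> a0 * (1 - alpha) * Rpower (hx - hxh) (- alpha) * vnorm v >= 1.

Definition subdiff_growth n (h : vec n -> ER) alpha xh hxh (a : ER) eps c :=
  forall x hx v, vnorm (vsub x xh) < eps -> h x = Fin hx -> hxh < hx ->
    ERlt (Fin hx) (ERadd (Fin hxh) a) -> subdiff h x v -> c * Rpower (hx - hxh) alpha <= vnorm v.

Lemma KL_at_of_growth n (h : vec n -> ER) alpha xh hxh a eps c :
  alpha < 1 -> ERlt (Fin 0) a -> 0 < eps -> 0 < c ->
  subdiff_growth h alpha xh hxh a eps c -> KL_at h alpha xh hxh.
Proof.
move=> alpha_lt1 a_gt0 eps_gt0 c_gt0 growth.
exists a, eps, (/ (c * (1 - alpha))); do 2 (split => //).
split; first by apply: Rinv_0_lt_compat; nra.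
move=> x hx x_near hx_eq gap_gt0 gap_small v /(growth _ _ _ x_near hx_eq gap_gt0 gap_small).
rewrite Rpower_Ropp; have := Rpower_pos (hx - hxh) alpha; set s := Rpower _ _ => s_gt0 v_ge.
have -> : / (c * (1 - alpha)) * (1 - alpha) * / s * vnorm v = vnorm v / (c * s) by field; lra.
apply: Rle_ge; rewrite -(Rinv_r (c * s)); last nra.
by apply: Rmult_le_compat_r => //; apply: Rlt_le; apply: Rinv_0_lt_compat; nra.
Qed.

Lemma subdiff_Fin n (L : vec n -> R) x u :
  subgrad L x u -> subdiff (fun z => Fin (L z)) x u.
Proof. by move=> x_sub; exists (L x); split => // z; apply: Rle_ge. Qed.

Lemma KL_at_Fin_growth n (L : vec n -> R) alpha xh m :
  alpha < 1 -> KL_at (fun z => Fin (L z)) alpha xh m ->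
  exists eps A c, 0 < eps /\ 0 < A /\ 0 < c /\ forall x u, vnorm (vsub x xh) < eps ->
    m < L x -> L x < m + A -> subgrad L x u -> c * Rpower (L x - m) alpha <= vnorm u.
Proof.
move=> alpha_lt1 [a [eps [a0 [a_gt0 [eps_gt0 [a0_gt0 KL]]]]]].
pose A := if a is Fin r then r else 1.
exists eps, A, (/ (a0 * (1 - alpha))); split => //.
split; first by rewrite /A; case: a a_gt0 {KL A} => [r|] /=; lra.
split; first by apply: Rinv_0_lt_compat; nra.
move=> x u x_near gap_gt0 gap_small /subdiff_Fin u_sub.
have gap_small' : ERlt (Fin (L x)) (ERadd (Fin m) a).
  by rewrite /A in gap_small; case: a {KL a_gt0 A} gap_small => [r|] /=.
move: (KL x (L x) x_near erefl gap_gt0 gap_small' u u_sub).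
rewrite Rpower_Ropp; have := Rpower_pos (L x - m) alpha; set s := Rpower _ _ => s_gt0 KL_x.
have -> : / (a0 * (1 - alpha)) * s = / (a0 * (1 - alpha)) * s * 1 by ring.
have -> : vnorm u = / (a0 * (1 - alpha)) * s * (a0 * (1 - alpha) * / s * vnorm u) by field; nra.
apply: Rmult_le_compat_l; last lra.
by apply: Rlt_le; apply: Rmult_lt_0_compat => //; apply: Rinv_0_lt_compat; nra.
Qed.

(** * The constrained problem *)

Lemma matvec_vcomb q n (A : mat q n) t x y :
  matvec A (vcomb t x y) = vcomb t (matvec A x) (matvec A y).
Proof.
apply: functional_extensionality => i; rewrite /matvec /vcomb -!vsum_scal -vsum_add.
by apply: vsum_ext => j; ring.
Qed.

Lemma strictly_convex_convex n (l : vec n -> R) : strictly_convex l -> convex l.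
Proof.
move=> l_scvx x y t t01; have [-> | xy] := classic (x = y).
  have -> : vcomb t y y = y by apply: functional_extensionality => i; rewrite /vcomb; ring.
  lra.
have [-> | t_ne0] := Req_dec t 0.
  have -> : vcomb 0 x y = y by apply: functional_extensionality => i; rewrite /vcomb; ring.
  lra.
have [-> | t_ne1] := Req_dec t 1.
  have -> : vcomb 1 x y = x by apply: functional_extensionality => i; rewrite /vcomb; ring.
  lra.
by have := l_scvx x y t xy ltac:(lra); lra.
Qed.

Lemma lagrange_multiplierP n q (P1 : vec n -> R) (A1 : mat q n) l1 lam :
  lagrange_multiplier P1 A1 l1 lam -> 0 <= lam /\ exists m,
    (forall x, m <= P1 x + lam * l1 (matvec A1 x)) /\
    (forall x, l1 (matvec A1 x) <= 0 -> m <= P1 x) /\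
    (forall b, (forall x, l1 (matvec A1 x) <= 0 -> b <= P1 x) -> b <= m).
Proof.
move=> [lam_ge0 [m [[L_ge _] [F_ge F_glb]]]]; split => //; exists m; split; last split.
- by move=> x; apply: L_ge; exists x.
- by move=> x x_feas; apply: F_ge; exists x.
- by move=> b b_le; apply: F_glb => _ [x [x_feas ->]]; exact: b_le.
Qed.

Lemma lagrange_multiplier_pos n q (P1 : vec n -> R) (A1 : mat q n) l1 lam :
  lagrange_multiplier P1 A1 l1 lam ->
  (exists c, (exists x0, P1 x0 < c) /\ forall x, l1 (matvec A1 x) <= 0 -> c <= P1 x) -> 0 < lam.
Proof.
move=> /lagrange_multiplierP [lam_ge0 [m [L_ge [_ F_glb]]]] [c [[x0 P1x0] c_le]].
case: (Rle_lt_or_eq_dec _ _ lam_ge0) => // lam0; have := L_ge x0; have := F_glb c c_le.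
by rewrite -lam0; lra.
Qed.

Section ConstrainedProblem.

Variables (n q : nat) (P1 : vec n -> R) (A1 : mat q n) (l1 : vec q -> R) (lam m : R).
Hypotheses (P1_cvx : convex P1) (l1_scvx : strictly_convex l1) (lam_gt0 : 0 < lam).

Let g x := l1 (matvec A1 x).
Let L x := P1 x + lam * g x.
Let F := Fobj P1 A1 l1.

Lemma Lagr_convex : convex L.
Proof.
move=> x y t t01; have := @P1_cvx x y t t01.
have := strictly_convex_convex l1_scvx (matvec A1 x) (matvec A1 y) t01.
rewrite /L /g matvec_vcomb => g_cvx P1_le.
by have := Rmult_le_compat_l lam _ _ (Rlt_le _ _ lam_gt0) g_cvx; lra.
Qed.

Lemma Fobj_feasible x : g x <= 0 -> F x = Fin (P1 x).
Proof. by rewrite /F /Fobj; case: Rle_dec. Qed.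

Lemma Fobj_Fin x hx : F x = Fin hx -> g x <= 0 /\ hx = P1 x.
Proof. by rewrite /F /Fobj; case: Rle_dec => // x_feas [<-]. Qed.

Lemma Fobj_subdiff x v : subdiff F x v ->
  g x <= 0 /\ forall y, g y <= 0 -> P1 x + dot v (vsub y x) <= P1 y.
Proof.
move=> [hx [/Fobj_Fin [x_feas ->] x_sub]]; split => // y y_feas.
by have := x_sub y; rewrite Fobj_feasible //; lra.
Qed.

Lemma Fobj_lsc : continuous_vec P1 -> lsc_real L -> lsc F.
Proof.
move=> P1_cont L_lsc x t; rewrite /F /Fobj; case: Rle_dec => [x_feas | x_infeas] /= t_lt.
  have [del [del_gt0 near]] := P1_cont x (P1 x - t) ltac:(lra).
  exists del; split => // y /near /Rabs_def2 [_ P1y]; case: Rle_dec => //= _; lra.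
have g_gt0 : 0 < g x by rewrite /g; lra.
have [del1 [del1_gt0 near1]] := L_lsc x (L x - lam * g x / 2) ltac:(nra).
have [del2 [del2_gt0 near2]] := P1_cont x (lam * g x / 4) ltac:(nra).
exists (Rmin del1 del2); split; first exact: Rmin_glb_lt.
move=> y y_near; case: Rle_dec => //= y_feas.
have := near1 y (Rlt_le_trans _ _ _ y_near (Rmin_l _ _)).
have /Rabs_def2 := near2 y (Rlt_le_trans _ _ _ y_near (Rmin_r _ _)).
by rewrite /L /g; have := Rmult_le_compat_l lam _ _ (Rlt_le _ _ lam_gt0) y_feas; lra.
Qed.

Lemma Fobj_growth_nonmin alpha xh y : 0 <= alpha -> g y <= 0 -> P1 y < P1 xh ->
  exists c, 0 < c /\ subdiff_growth F alpha xh (P1 xh) (Fin 1) 1 c.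
Proof.
move=> alpha_ge0 y_feas y_lt; have D_ge0 := vnorm_ge0 (vsub y xh).
exists ((P1 xh - P1 y) / (vnorm (vsub y xh) + 1)); split; first by apply: Rdiv_lt_0_compat; lra.
move=> x hx v x_near /Fobj_Fin [_ ->] gap_gt0 /= gap_lt1 /Fobj_subdiff [_ x_sub].
have gap_y := subgrad_gap_le (x_sub y y_feas).
have xy_lt : vnorm (vsub x y) < vnorm (vsub y xh) + 1.
  by have := vnorm_triangle x xh y; rewrite (vnorm_subC xh y); lra.
have pow_le1 : Rpower (P1 x - P1 xh) alpha <= 1 by apply: Rpower_le1; lra.
have v_ge0 := vnorm_ge0 v; have c_le : (P1 xh - P1 y) <= vnorm v * (vnorm (vsub y xh) + 1) by nra.
have : (P1 xh - P1 y) / (vnorm (vsub y xh) + 1) <= vnorm v.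
  by apply: (Rmult_le_reg_r (vnorm (vsub y xh) + 1)); [lra | rewrite /Rdiv Rmult_assoc Rinv_l; lra].
have : 0 < (P1 xh - P1 y) / (vnorm (vsub y xh) + 1) by apply: Rdiv_lt_0_compat; lra.
nra.
Qed.

(* Two minimizers of L with different images under A1 would have a strictly better midpoint. *)
Lemma Lagr_argmin_feasible xh : (forall x, m <= L x) -> P1 xh = m -> g xh = 0 ->
  forall p, L p <= m -> g p <= 0 /\ P1 p = m.
Proof.
move=> L_ge P1xh gxh p Lp; have [Ap_eq | Ap_ne] := classic (matvec A1 p = matvec A1 xh).
  have gp : g p = 0 by rewrite /g Ap_eq; exact: gxh.
  by have := L_ge p; rewrite /L gp in Lp *; split; lra.
have := @l1_scvx _ _ (/ 2) Ap_ne ltac:(lra); rewrite -matvec_vcomb => g_mid.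
have := @P1_cvx p xh (/ 2) ltac:(lra); have := L_ge (vcomb (/ 2) p xh).
have := Rmult_lt_compat_l lam _ _ lam_gt0 g_mid; have := L_ge p.
rewrite /L /g in Lp gxh *; rewrite gxh => *; exfalso; lra.
Qed.

Lemma Fobj_growth_of_error_bound xh alpha eps a C :
  (forall p, L p <= m -> g p <= 0 /\ P1 p = m) -> 0 < alpha < 1 -> 0 < C ->
  (forall x, vnorm (vsub x xh) < eps -> m < L x -> L x < m + a ->
    exists p, L p <= m /\ vnorm (vsub x p) <= C * Rpower (L x - m) (1 - alpha)) ->
  subdiff_growth F alpha xh m (Fin a) eps (/ C).
Proof.
move=> argmin alpha01 C_gt0 error_bound x hx v x_near /Fobj_Fin [x_feas ->] gap_gt0 /= gap_small.
move=> /Fobj_subdiff [_ x_sub].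
have Lx_le : L x <= P1 x.
  by have := Rmult_le_compat_l lam _ _ (Rlt_le _ _ lam_gt0) x_feas; rewrite /L; lra.
have Lx_gt : m < L x by apply: Rnot_le_lt => /argmin [_]; lra.
have [p [/[dup] /argmin [p_feas P1p] Lp dist_p]] := error_bound x x_near Lx_gt ltac:(lra).
have gap_le := subgrad_gap_le (x_sub p p_feas); rewrite P1p in gap_le.
have : P1 x - m <= vnorm v * C * Rpower (P1 x - m) (1 - alpha).
  apply: Rle_trans gap_le _; rewrite Rmult_assoc; apply: Rmult_le_compat_l; first exact: vnorm_ge0.
  apply: Rle_trans dist_p _; apply: Rmult_le_compat_l; first lra.
  by apply: Rle_Rpower_l; lra.
move=> /Rpower_le_of_le_mul_Rpower pow_le; apply: (Rmult_le_reg_l C) => //.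
by rewrite -Rmult_assoc Rinv_r ?Rmult_1_l; have := pow_le ltac:(lra); lra.
Qed.

Lemma Lagr_at_constrained_min xh : (forall x, m <= L x) ->
  (forall b, (forall y, g y <= 0 -> b <= P1 y) -> b <= m) ->
  g xh <= 0 -> ~ (exists y, g y <= 0 /\ P1 y < P1 xh) -> P1 xh = m /\ g xh = 0.
Proof.
move=> L_ge F_glb xh_feas xh_min; have m_le := L_ge xh; rewrite /L in m_le.
have P1_le : P1 xh <= m.
  by apply: F_glb => y y_feas; apply: Rnot_lt_le => y_lt; apply: xh_min; exists y.
have g_ge0 : 0 <= g xh by apply: (Rmult_le_reg_l lam) => //; lra.
have g0 : g xh = 0 by lra.
by rewrite g0 Rmult_0_r in m_le; split; lra.
Qed.

Lemma Lagr_KL_at_min alpha xh : KL_exp (Lagr P1 A1 l1 lam) alpha ->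
  (forall x, m <= L x) -> L xh = m -> KL_at (fun x => Fin (L x)) alpha xh m.
Proof.
move=> [_ [_ [_ L_KL]]] L_ge Lxh.
have [|hxh [[e] KL_xh]] := L_KL xh; last by move: Lxh; rewrite /L /g e => <-.
exists (fun _ => 0); apply: subdiff_Fin => z; rewrite dot0l.
by move: (L_ge z) Lxh; rewrite /L /g; lra.
Qed.

End ConstrainedProblem.

Theorem mainTheorem14 (n q1 : nat) (P1 : vec n -> R) (A1 : mat q1 n)
  (l1 : vec q1 -> R) (alpha : R) :
  convex P1 -> continuous_vec P1 ->
  strictly_convex l1 ->
  (exists x, l1 (matvec A1 x) <= 0) ->
  (* (i) inf P1 < inf F *)
  (exists c, (exists x0, P1 x0 < c) /\
             forall x, l1 (matvec A1 x) <= 0 -> c <= P1 x) ->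
  (* (ii) *)
  0 < alpha < 1 ->
  (exists lam, lagrange_multiplier P1 A1 l1 lam /\ KL_exp (Lagr P1 A1 l1 lam) alpha) ->
  KL_exp (Fobj P1 A1 l1) alpha.
Proof.
move=> P1_cvx P1_cont l1_scvx [xf xf_feas] gap_i alpha01 [lam [mult L_KL]].
have [_ [_ [L_lsc _]]] := L_KL.
have lam_gt0 := lagrange_multiplier_pos mult gap_i.
have [_ [m [L_ge [_ F_glb]]]] := lagrange_multiplierP mult.
split; first lra; split; first by exists xf, (P1 xf); apply: Fobj_feasible.
split; first exact: (Fobj_lsc lam_gt0 P1_cont L_lsc).
move=> xh [v /Fobj_subdiff [xh_feas _]]; exists (P1 xh); split; first exact: Fobj_feasible.
have [[y [y_feas y_lt]] | xh_min] := classic (exists y, l1 (matvec A1 y) <= 0 /\ P1 y < P1 xh).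
  have [c [c_gt0 growth]] := Fobj_growth_nonmin (Rlt_le _ _ (proj1 alpha01)) y_feas y_lt.
  by apply: KL_at_of_growth growth => /=; lra.
have [P1xh gxh] := Lagr_at_constrained_min lam_gt0 L_ge F_glb xh_feas xh_min.
have Lxh : P1 xh + lam * l1 (matvec A1 xh) = m by rewrite gxh P1xh; ring.
have KL_xh := Lagr_KL_at_min L_KL L_ge Lxh.
have [eps [A [c [eps_gt0 [A_gt0 [c_gt0 KL_real]]]]]] := KL_at_Fin_growth (proj2 alpha01) KL_xh.
have [eps' [a' [C [eps'_gt0 [a'_gt0 [C_gt0 EB]]]]]] :=
  KL_error_bound alpha01 (Lagr_convex A1 P1_cvx l1_scvx lam_gt0) L_lsc L_ge
    eps_gt0 A_gt0 c_gt0 KL_real.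
have argmin := Lagr_argmin_feasible P1_cvx l1_scvx lam_gt0 L_ge P1xh gxh.
rewrite P1xh; apply: (KL_at_of_growth (a := Fin a') (proj2 alpha01) a'_gt0 eps'_gt0
  (Rinv_0_lt_compat _ C_gt0)).
exact: Fobj_growth_of_error_bound argmin alpha01 C_gt0 EB.
Qed.
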